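(* Let $\vec B_0$ be the oriented graph with vertex set $\{x_1,\dots,x_8\}$ and arcs $x_5x_4,\ x_6x_4,\ x_7x_4,\ x_4x_1,\ x_4x_2,\ x_4x_3,\ x_1x_2,\ x_2x_3,\ x_5x_6,\ x_6x_7$ and $x_8x_i$ for all $i\in\{1,\dots,7\}$. Then $\vec B_0$ is planar and $\chi_p([\vec B_0])=8$; more precisely, under any homomorphism of any presentation of $[\vec B_0]$ to any oriented graph, the eight vertices have pairwise distinct images.
   Context: An oriented graph is a directed graph with no loops and no pair of opposite arcs. A homomorphism of oriented graphs $\vec G\to\vec H$ is a vertex map sending every arc $uv$ to an arc $\varphi(u)\varphi(v)$. To push a vertex means to reverse all arcs incident with it; the push graph $[\vec G]$ is the set of oriented graphs obtainable from $\vec G$ by pushing some set of vertices (its presentations). The push chromatic number $\chi_p([\vec G])$ is the minimum number of vertices of an oriented graph $\vec H$ such that some presentation of $[\vec G]$ admits a homomorphism to $\vec H$. *)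

From HB Require Import structures.
From mathcomp Require Import all_boot all_order all_algebra.
Set Implicit Arguments. Unset Strict Implicit. Unset Printing Implicit Defensive.
Import Order.TTheory GRing.Theory Num.Theory.

Definition oriented (W : Type) (b : W -> W -> Prop) : Prop :=
  (forall x, ~ b x x) /\ (forall x y, b x y -> ~ b y x).

Definition or_hom (V W : Type) (a : V -> V -> Prop) (b : W -> W -> Prop)
  (phi : V -> W) : Prop :=
  forall u v, a u v -> b (phi u) (phi v).

(* Pushing the vertex set S: every arc with exactly one end in S is reversed.
   The presentations of [G] are exactly the push a S, S : {set V}. *)
Definition push (V : finType) (a : rel V) (S : {set V}) : rel V :=
  fun u v => if (u \in S) (+) (v \in S) then a v u else a u v.

Definition push_colorable (V : finType) (a : rel V) (k : nat) : Prop :=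
  exists (S : {set V}) (b : rel 'I_k) (phi : V -> 'I_k),
    oriented b /\ or_hom (push a S) b phi.

Definition is_push_chromatic_number (V : finType) (a : rel V) (n : nat) : Prop :=
  push_colorable a n /\ forall k, push_colorable a k -> (n <= k)%N.

Local Open Scope ring_scope.

Definition on_seg (R : realFieldType) (p q r : R * R) : Prop :=
  exists t : R, 0 <= t <= 1 /\
    p.1 = q.1 + t * (r.1 - q.1) /\ p.2 = q.2 + t * (r.2 - q.2).

Definition uedge (V : finType) (a : rel V) (u v : V) : bool := a u v || a v u.

Definition planar (R : realFieldType) (V : finType) (a : rel V) : Prop :=
  exists pos : V -> R * R,
    injective pos /\
    (forall w u v, uedge a u v -> on_seg (pos w) (pos u) (pos v) ->
        w = u \/ w = v) /\
    (forall u v x y (p : R * R), uedge a u v -> uedge a x y ->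
        ~ ((x == u) && (y == v) || (x == v) && (y == u)) ->
        on_seg p (pos u) (pos v) -> on_seg p (pos x) (pos y) ->
        exists w, p = pos w /\ (w = u \/ w = v) /\ (w = x \/ w = y)).

Local Close Scope ring_scope.

(* Vertex x_i is represented by the ordinal i-1 : 'I_8. *)
Definition B0_arcs : seq (nat * nat) :=
  [:: (4,3); (5,3); (6,3); (3,0); (3,1); (3,2); (0,1); (1,2); (4,5); (5,6);
      (7,0); (7,1); (7,2); (7,3); (7,4); (7,5); (7,6)].

Definition B0 : rel 'I_8 := fun u v => (nat_of_ord u, nat_of_ord v) \in B0_arcs.

From mathcomp Require Import all_boot all_order all_algebra.
From mathcomp Require Import ring lra zify.
Set Implicit Arguments. Unset Strict Implicit. Unset Printing Implicit Defensive.
Import Order.TTheory GRing.Theory Num.Theory.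

(* Planarity: put x4 and x8 at (0, 1) and (0, -1) and the other vertices on
   the positive x-axis, the paths x1x2x3 and x5x6x7 on consecutive integers.
   Every edge is then the pole x4x8, a spoke from a pole to the axis, or a
   unit segment of the axis, and two segments of these kinds only meet at a
   common end.

   Push chromatic number: in every presentation of [B0] any two vertices are
   adjacent or joined by a directed path of length two (a finite check over
   the 2^8 pushed sets), so no homomorphism to an oriented graph can identify
   them.  Hence 8 colours are needed, and B0 itself is a target on 8
   vertices. *)

Local Open Scope ring_scope.

Section Segments.
Variable R : realFieldType.
Implicit Types (p q r : R * R) (c e y : R).

Lemma on_seg_sym p q r : on_seg p q r -> on_seg p r q.
Proof.
case=> t [/andP [t0 t1] [e1 e2]]; exists (1 - t).
by split; [apply/andP; split; lra | rewrite e1 e2; split; ring].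
Qed.

Lemma on_seg_spoke p e c : on_seg p (0, e) (c, 0) ->
  exists2 t, 0 <= t <= 1 & p = (t * c, (1 - t) * e).
Proof.
case: p => p1 p2 [t [t01 /= [-> ->]]]; exists t => //.
by congr (_, _); ring.
Qed.

Lemma on_seg_axis p (n : nat) : on_seg p (n%:R, 0) (n.+1%:R, 0) ->
  p.2 = 0 /\ n%:R <= p.1 <= n.+1%:R.
Proof.
case=> t [/andP [t0 t1] /= [-> ->]]; rewrite -natr1.
by split; [ring | apply/andP; split; lra].
Qed.

Lemma on_seg_pole p y y' : on_seg p (0, y) (0, y') -> p.1 = 0.
Proof. by case=> t [_ /= [-> _]]; ring. Qed.

Lemma spokes_meet_at_apex p e c c' : e != 0 -> c != c' ->
  on_seg p (0, e) (c, 0) -> on_seg p (0, e) (c', 0) -> p = (0, e).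
Proof.
move=> e0 cc' /on_seg_spoke [t _ ->] /on_seg_spoke [s _ [ts est]].
have st : s = t by apply: (mulIf e0); lra.
subst s; have : t * (c - c') = 0 by lra.
move/eqP; rewrite mulf_eq0 subr_eq0 (negPf cc') orbF => /eqP ->.
by rewrite mul0r subr0 mul1r.
Qed.

Lemma opposite_spokes_meet p e c c' : e != 0 ->
  on_seg p (0, e) (c, 0) -> on_seg p (0, - e) (c', 0) -> p = (c, 0) /\ c = c'.
Proof.
move=> e0 /on_seg_spoke [t /andP [t0 t1] ->].
move=> /on_seg_spoke [s /andP [s0 s1] [ts est]].
have : (2 - t - s) * e = 0 by lra.
move/eqP; rewrite mulf_eq0 (negPf e0) orbF => /eqP ts2.
have t_1 : t = 1 by lra.
have s_1 : s = 1 by lra.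
by move: ts; rewrite t_1 s_1 !mul1r => ->; split; [congr (_, _); ring | ].
Qed.

Lemma spoke_meets_axis p e (c n : nat) : e != 0 ->
  on_seg p (0, e) (c%:R, 0) -> on_seg p (n%:R, 0) (n.+1%:R, 0) ->
  p = (c%:R, 0) /\ (c = n \/ c = n.+1)%N.
Proof.
move=> e0 /on_seg_spoke [t _ ->] /on_seg_axis [/= /eqP].
rewrite mulf_eq0 (negPf e0) orbF subr_eq0 => /eqP <-.
rewrite mul1r subrr mul0r !ler_nat => /andP [nc cn]; split => //; lia.
Qed.

Lemma axis_segments_meet p (n m : nat) : n != m ->
  on_seg p (n%:R, 0) (n.+1%:R, 0) -> on_seg p (m%:R, 0) (m.+1%:R, 0) ->
  (p = (m%:R, 0) /\ m = n.+1) \/ (p = (n%:R, 0) /\ n = m.+1).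
Proof.
case: p => p1 p2 nm /on_seg_axis [/= -> pn] /on_seg_axis [_ /= pm].
wlog lt_nm : n m nm pn pm / (n < m)%N.
  move=> W; case: (ltngtP n m) => [|lt_mn|eq_nm]; first exact: W.
  - by rewrite or_comm; apply: W; rewrite // eq_sym.
  - by rewrite eq_nm eqxx in nm.
have le_n1m : n.+1%:R <= m%:R :> R by rewrite ler_nat.
have -> : p1 = m%:R by lra.
left; split => //; apply/eqP; rewrite eqn_leq lt_nm -(ler_nat R); lra.
Qed.

Lemma pole_meets_spoke p y y' e c : c != 0 ->
  on_seg p (0, y) (0, y') -> on_seg p (0, e) (c, 0) -> p = (0, e).
Proof.
move=> c0 /on_seg_pole p10 /on_seg_spoke [t _ pE]; move: p10; rewrite pE /=.
move/eqP; rewrite mulf_eq0 (negPf c0) orbF => /eqP ->.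
by rewrite mul0r subr0 mul1r.
Qed.

Lemma pole_misses_axis p y y' (n : nat) : (0 < n)%N ->
  on_seg p (0, y) (0, y') -> ~ on_seg p (n%:R, 0) (n.+1%:R, 0).
Proof.
move=> n0 /on_seg_pole p10 /on_seg_axis [_ /andP [np _]].
have : 0 < n%:R :> R by rewrite ltr0n.
by rewrite p10 in np; lra.
Qed.

End Segments.

Definition meet_at_ends (R : realFieldType) (V : Type) (pos : V -> R * R)
    (u v u' v' : V) : Prop :=
  forall p, on_seg p (pos u) (pos v) -> on_seg p (pos u') (pos v') ->
    exists w, p = pos w /\ (w = u \/ w = v) /\ (w = u' \/ w = v').

Section MeetAtEnds.
Variables (R : realFieldType) (V : Type) (pos : V -> R * R).

Lemma meet_at_endsC u v u' v' :
  meet_at_ends pos u v u' v' -> meet_at_ends pos u' v' u v.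
Proof. by move=> M p s s'; have [w [pw [wuv wuv']]] := M p s' s; exists w. Qed.

Lemma meet_at_ends_rev u v u' v' :
  meet_at_ends pos u v u' v' -> meet_at_ends pos v u u' v'.
Proof.
move=> M p s s'; have [w [pw [wuv wuv']]] := M p (on_seg_sym s) s'.
by exists w; rewrite or_comm.
Qed.

End MeetAtEnds.

(* A vertex [w] on an edge [uv] lies on the edge [wz] as well, so the
   vertex condition of planarity follows from the edge condition. *)
Lemma planar_of_meet_at_ends (R : realFieldType) (V : finType) (a : rel V)
    (pos : V -> R * R) :
  injective pos -> (forall w, exists z, uedge a w z) ->
  (forall u v u' v', uedge a u v -> uedge a u' v' ->
     ~ ((u' == u) && (v' == v) || (u' == v) && (v' == u)) ->
     meet_at_ends pos u v u' v') ->
  planar R a.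
Proof.
move=> pos_inj nbr meet; exists pos; split=> //.
split=> [w u v uv wuv|u v u' v' p uv uv' diff]; last exact: meet uv uv' diff p.
have [z wz] := nbr w.
have w_wz : on_seg (pos w) (pos w) (pos z).
  by exists 0; split; [rewrite lexx ler01 | rewrite !mul0r !addr0].
have [same | diff] := boolP ((w == u) && (z == v) || (w == v) && (z == u)).
  by case/orP: same => /andP [/eqP -> _]; [left | right].
by have [w' [/pos_inj <- []]] := meet u v w z uv wz (negP diff) _ wuv w_wz.
Qed.

Section ApexDrawing.
Variables (R : realFieldType) (V : finType) (a : rel V) (top bot : V).
Variable absc : V -> nat.
Hypothesis top_neq_bot : top != bot.
Hypothesis absc_inj : injective absc.
Hypothesis absc_gt0 : forall v, (0 < absc v)%N.
Hypothesis a_irr : irreflexive a.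

Definition apex (v : V) : bool := (v == top) || (v == bot).

Hypothesis axis_arc : forall u v, a u v -> ~~ apex u -> ~~ apex v ->
  absc v = (absc u).+1 \/ absc u = (absc v).+1.

Definition apex_height (h : V) : R := if h == top then 1 else -1.

Definition apex_pos (v : V) : R * R :=
  if apex v then (0, apex_height v) else ((absc v)%:R, 0).

Inductive drawn_edge : V -> V -> Prop :=
  | PoleEdge : drawn_edge top bot
  | SpokeEdge h w : apex h -> ~~ apex w -> drawn_edge h w
  | AxisEdge u v : ~~ apex u -> ~~ apex v -> absc v = (absc u).+1 ->
      drawn_edge u v.

Lemma apex_height_neq0 h : apex_height h != 0.
Proof.
by rewrite /apex_height; case: (h =P top); rewrite ?oppr_eq0 oner_neq0.
Qed.

Lemma apex_height_opp h h' : apex h -> apex h' -> h != h' ->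
  apex_height h' = - apex_height h.
Proof.
rewrite /apex_height => /orP [] /eqP -> /orP [] /eqP ->;
  by rewrite ?eqxx // => _; rewrite ?(eq_sym bot) (negPf top_neq_bot) ?opprK.
Qed.

Lemma apex_posE h : apex h -> apex_pos h = (0, apex_height h).
Proof. by rewrite /apex_pos => ->. Qed.

Lemma axis_posE w : ~~ apex w -> apex_pos w = ((absc w)%:R, 0).
Proof. by rewrite /apex_pos => /negPf ->. Qed.

Lemma absc_neq0 w : (absc w)%:R != 0 :> R.
Proof. by rewrite pnatr_eq0 -lt0n. Qed.

Lemma apex_pos_inj : injective apex_pos.
Proof.
move=> u v; rewrite /apex_pos.
case hu: (apex u); case hv: (apex v); move=> /pair_equal_spec [uv1 uv2].
- apply/eqP; apply: contraT => neq_uv.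
  have := apex_height_opp hu hv neq_uv; rewrite -uv2 => /eqP.
  by rewrite eq_sym eqNr (negPf (apex_height_neq0 u)).
- by move: (absc_neq0 v); rewrite -uv1 eqxx.
- by move: (absc_neq0 u); rewrite uv1 eqxx.
- by apply: absc_inj; apply/eqP; rewrite -(eqr_nat R) uv1.
Qed.

Lemma apex_top : apex top. Proof. by rewrite /apex eqxx. Qed.
Lemma apex_bot : apex bot. Proof. by rewrite /apex eqxx orbT. Qed.

Lemma uedge_drawn_edge u v : uedge a u v -> drawn_edge u v \/ drawn_edge v u.
Proof.
move=> uv.
have neq_uv : u != v by apply: contraTneq uv => ->; rewrite /uedge a_irr.
case hu: (apex u); case hv: (apex v).
- move: hu hv neq_uv; rewrite /apex => /orP [] /eqP -> /orP [] /eqP ->;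
    rewrite ?eqxx // => _; first [by left; constructor | by right; constructor].
- by left; apply: SpokeEdge; rewrite ?hv.
- by right; apply: SpokeEdge; rewrite ?hu.
- case/orP: uv => /axis_arc; rewrite hu hv => /(_ isT isT) [] uv;
    first [by left; apply: AxisEdge; rewrite ?hu ?hv
          | by right; apply: AxisEdge; rewrite ?hu ?hv].
Qed.

Definition same_edge (u v u' v' : V) : bool :=
  (u' == u) && (v' == v) || (u' == v) && (v' == u).

Lemma same_edge_revl u v u' v' : same_edge v u u' v' = same_edge u v u' v'.
Proof. by rewrite /same_edge orbC. Qed.

Lemma same_edge_revr u v u' v' : same_edge u v v' u' = same_edge u v u' v'.
Proof. by rewrite /same_edge orbC (andbC (v' == v)) (andbC (v' == u)). Qed.

Lemma pole_spoke_meet h w : apex h -> ~~ apex w ->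
  meet_at_ends apex_pos top bot h w.
Proof.
move=> hh hw p; rewrite (apex_posE apex_top) (apex_posE apex_bot).
rewrite (apex_posE hh) (axis_posE hw) => s1 s2.
exists h; rewrite (apex_posE hh).
split; first exact: pole_meets_spoke (absc_neq0 w) s1 s2.
by split; [case/orP: hh => /eqP; [left | right] | left].
Qed.

Lemma pole_axis_meet u v : ~~ apex u -> ~~ apex v -> absc v = (absc u).+1 ->
  meet_at_ends apex_pos top bot u v.
Proof.
move=> hu hv uv p; rewrite (apex_posE apex_top) (apex_posE apex_bot).
rewrite (axis_posE hu) (axis_posE hv) uv.
by move=> s1 /(pole_misses_axis (absc_gt0 u) s1).
Qed.

Lemma spoke_spoke_meet h w h' w' :
  apex h -> ~~ apex w -> apex h' -> ~~ apex w' -> ~~ same_edge h w h' w' ->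
  meet_at_ends apex_pos h w h' w'.
Proof.
move=> hh hw hh' hw' diff p.
rewrite (apex_posE hh) (apex_posE hh') (axis_posE hw) (axis_posE hw').
have [eq_hh'|neq_hh'] := eqVneq h h'.
  have neq_ww' : (absc w)%:R != (absc w')%:R :> R.
    rewrite eqr_nat; apply: contraNneq diff => /absc_inj <-.
    by rewrite /same_edge eq_hh' !eqxx.
  rewrite -eq_hh' => s1 s2; exists h; rewrite (apex_posE hh).
  split; last by split; left.
  exact: spokes_meet_at_apex (apex_height_neq0 h) neq_ww' s1 s2.
rewrite (apex_height_opp hh hh' neq_hh') => s1 s2.
have [-> /eqP] := opposite_spokes_meet (apex_height_neq0 h) s1 s2.
rewrite eqr_nat => /eqP /absc_inj ww'.
by exists w; rewrite (axis_posE hw); split; last by split; right.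
Qed.

Lemma spoke_axis_meet h w u v : apex h -> ~~ apex w -> ~~ apex u -> ~~ apex v ->
  absc v = (absc u).+1 -> meet_at_ends apex_pos h w u v.
Proof.
move=> hh hw hu hv uv p.
rewrite (apex_posE hh) (axis_posE hw) (axis_posE hu) (axis_posE hv) uv => s1 s2.
have [-> wuv] := spoke_meets_axis (apex_height_neq0 h) s1 s2.
exists w; rewrite (axis_posE hw); split=> //; split; first by right.
by case: wuv => [|]; rewrite -?uv => /absc_inj; [left | right].
Qed.

Lemma axis_axis_meet u v u' v' :
  ~~ apex u -> ~~ apex v -> ~~ apex u' -> ~~ apex v' ->
  absc v = (absc u).+1 -> absc v' = (absc u').+1 -> ~~ same_edge u v u' v' ->
  meet_at_ends apex_pos u v u' v'.
Proof.
move=> hu hv hu' hv' uv uv' diff p.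
have neq_uu' : absc u != absc u'.
  apply: contraNneq diff => eq_uu'.
  have eq_vv' : absc v = absc v' by rewrite uv uv' eq_uu'.
  by rewrite /same_edge (absc_inj eq_uu') (absc_inj eq_vv') !eqxx.
rewrite (axis_posE hu) (axis_posE hv) (axis_posE hu') (axis_posE hv') uv uv'.
move=> s1 s2.
case: (axis_segments_meet neq_uu' s1 s2) => -[-> e].
  exists u'; rewrite (axis_posE hu'); split=> //.
  by split; [right; apply: absc_inj; rewrite uv | left].
exists u; rewrite (axis_posE hu); split=> //.
by split; [left | right; apply: absc_inj; rewrite uv'].
Qed.

Lemma drawn_edge_meet u v u' v' : drawn_edge u v -> drawn_edge u' v' ->
  ~~ same_edge u v u' v' -> meet_at_ends apex_pos u v u' v'.
Proof.
case=> [|h w hh hw|u0 v0 hu hv uv]; case=> [|h' w' hh' hw'|u1 v1 hu' hv' uv'] diff.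
- by move: diff; rewrite /same_edge !eqxx.
- exact: pole_spoke_meet.
- exact: pole_axis_meet.
- exact/meet_at_endsC/pole_spoke_meet.
- exact: spoke_spoke_meet.
- exact: spoke_axis_meet.
- exact/meet_at_endsC/pole_axis_meet.
- exact/meet_at_endsC/spoke_axis_meet.
- exact: axis_axis_meet.
Qed.

Lemma planar_apex_drawing : (forall w, exists z, uedge a w z) -> planar R a.
Proof.
move=> nbr; apply: (planar_of_meet_at_ends apex_pos_inj nbr).
move=> u v u' v' uv uv' diff.
have {}diff : ~~ same_edge u v u' v' by apply/negP.
case: (uedge_drawn_edge uv) => e; case: (uedge_drawn_edge uv') => e'.
- exact: drawn_edge_meet e e' diff.
- apply/meet_at_endsC/meet_at_ends_rev/meet_at_endsC/(drawn_edge_meet e e').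
  by rewrite same_edge_revr.
- by apply/meet_at_ends_rev/(drawn_edge_meet e e'); rewrite same_edge_revl.
- apply/meet_at_ends_rev/meet_at_endsC/meet_at_ends_rev/meet_at_endsC.
  apply: (drawn_edge_meet e e').
  by rewrite same_edge_revl same_edge_revr.
Qed.

End ApexDrawing.

Local Close Scope ring_scope.

Definition oclique (V : eqType) (a : V -> V -> Prop) : Prop :=
  forall u v, u != v ->
    [\/ a u v, a v u | exists w, a u w /\ a w v \/ a v w /\ a w u].

Lemma oclique_hom_injective (V : eqType) (W : Type) (a : V -> V -> Prop)
    (b : W -> W -> Prop) (phi : V -> W) :
  oclique a -> oriented b -> or_hom a b phi -> injective phi.
Proof.
move=> cl [b_irr b_asym] hom u v e; apply/eqP; apply: contraT => /cl.
case=> [/hom|/hom|[w [[/hom uw /hom wv]|[/hom vw /hom wu]]]]; rewrite ?e.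
- by move/b_irr.
- by move/b_irr.
- by rewrite e in uw; case: (b_asym _ _ uw wv).
- by rewrite e in wu; case: (b_asym _ _ vw wu).
Qed.

Lemma oclique_eq (V : eqType) (a b : V -> V -> Prop) :
  (forall u v, a u v <-> b u v) -> oclique a -> oclique b.
Proof.
move=> ab cl u v /cl [/ab uv|/ab vu|[w [[/ab uw /ab wv]|[/ab vw /ab wu]]]].
- exact: Or31.
- exact: Or32.
- by apply: Or33; exists w; left.
- by apply: Or33; exists w; right.
Qed.

(* Set membership and the enumeration of ['I_n] are blocked by opaque proofs
   under [vm_compute], so the check runs on [nat]. *)
Definition oclique_iota (n : nat) (r : rel nat) : bool :=
  all (fun u => all (fun v => (u != v) ==>
    [|| r u v, r v u | has (fun w => r u w && r w v || r v w && r w u) (iota 0 n)])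
    (iota 0 n)) (iota 0 n).

Lemma oclique_iotaP n (r : rel nat) :
  oclique_iota n r -> oclique (fun u v : 'I_n => r u v).
Proof.
move=> /allP cl u v neq_uv.
have in_iota (i : 'I_n) : val i \in iota 0 n by rewrite mem_iota ltn_ord.
have /allP/(_ v (in_iota v)) := cl u (in_iota u); rewrite neq_uv.
case/or3P=> [uv|vu|/hasP [w]]; [exact: Or31 | exact: Or32 |].
rewrite mem_iota /= => w_lt /orP [] /andP [r1 r2]; apply: Or33.
  by exists (Ordinal w_lt); left.
by exists (Ordinal w_lt); right.
Qed.

Definition push_by (T : Type) (r : rel T) (m : pred T) : rel T :=
  fun u v => if m u (+) m v then r v u else r u v.

Definition B0n : rel nat := fun i j => (i, j) \in B0_arcs.

Lemma push_B0n_oclique (bs : seq bool) : size bs = 8 ->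
  oclique_iota 8 (push_by B0n (nth false bs)).
Proof.
case: bs => [|b0 [|b1 [|b2 [|b3 [|b4 [|b5 [|b6 [|b7 []]]]]]]]] // _.
by move: b0 b1 b2 b3 b4 b5 b6 b7; do 8 case; vm_compute.
Qed.

Lemma push_B0_oclique (S : {set 'I_8}) : oclique (push B0 S).
Proof.
pose bs := [seq inord i \in S | i <- iota 0 8].
have bsE (u : 'I_8) : nth false bs u = (u \in S).
  by rewrite (nth_map 0) ?size_iota // nth_iota // add0n inord_val.
have size_bs : size bs = 8 by rewrite size_map.
apply: oclique_eq (oclique_iotaP (push_B0n_oclique size_bs)).
by move=> u v; rewrite /push_by !bsE.
Qed.

Definition x4 : 'I_8 := Ordinal (isT : 3 < 8).
Definition x8 : 'I_8 := Ordinal (isT : 7 < 8).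

Lemma B0_irreflexive : irreflexive B0.
Proof. by case=> [[|[|[|[|[|[|[|[|?]]]]]]]] ?]. Qed.

Lemma oriented_B0 : oriented B0.
Proof.
split=> [u|u v]; first by rewrite B0_irreflexive.
by case: u v => [[|[|[|[|[|[|[|[|?]]]]]]]] ?] [[|[|[|[|[|[|[|[|?]]]]]]]] ?].
Qed.

Lemma planar_B0 (R : realFieldType) : planar R B0.
Proof.
apply: (@planar_apex_drawing R _ B0 x4 x8 (fun v => (val v).+1)) => //.
- by move=> u v /succn_inj /val_inj.
- exact: B0_irreflexive.
- case=> [[|[|[|[|[|[|[|[|?]]]]]]]] ?] [[|[|[|[|[|[|[|[|?]]]]]]]] ?] // _ _ _;
    by [left | right].
- move=> w; exists (if val w == 7 then x4 else x8).
  by case: w => [[|[|[|[|[|[|[|[|?]]]]]]]] ?].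
Qed.

Theorem mainTheorem9 :
  (forall R : realFieldType, planar R B0) /\
  is_push_chromatic_number B0 8 /\
  (forall (S : {set 'I_8}) (W : Type) (b : W -> W -> Prop),
     oriented b -> forall phi : 'I_8 -> W, or_hom (push B0 S) b phi ->
     injective phi).
Proof.
have hom_inj S W b (ob : oriented b) (phi : 'I_8 -> W)
    (hom : or_hom (push B0 S) b phi) : injective phi :=
  oclique_hom_injective (push_B0_oclique S) ob hom.
split; first exact: planar_B0.
split; last exact: hom_inj.
split.
  exists set0, B0, id; split; first exact: oriented_B0.
  by move=> u v; rewrite /push !inE.
move=> k [S [b [phi [ob hom]]]].
by have := leq_card phi (hom_inj _ _ _ ob _ hom); rewrite !card_ord.
Qed.
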